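(* Let $(B,\nu_B)$ be as in the context and let $\varphi,\psi:B\to S^1$ be measurable maps such that (1) $\varphi_*\nu_B$ and $\psi_*\nu_B$ have no atoms; (2) the essential images of $\varphi$ and $\psi$ both equal $S^1$; (3) $o(\varphi(x),\varphi(y),\varphi(z))=o(\psi(x),\psi(y),\psi(z))$ for almost every $(x,y,z)\in B^3$. Then the essential image $F\subset S^1\times S^1$ of the map $x\mapsto(\varphi(x),\psi(x))$ is the graph of an orientation preserving homeomorphism $h:S^1\to S^1$, and $h(\varphi(x))=\psi(x)$ for almost every $x\in B$.
   Context: $(B,\nu_B)$ is a standard Lebesgue probability space (in the paper, a $G$-space for a locally compact second countable group $G$ with $\mu$-stationary, doubly ergodic, amenable action). The essential image of a measurable map into a compact metric space is the support of the pushforward of $\nu_B$. The orientation cocycle $o:(S^1)^3\to\{-1,0,1\}$ is $1$ on positively oriented triples, $-1$ on negatively oriented triples, and $0$ if the points are not pairwise distinct. *)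

From HB Require Import structures.
From mathcomp Require Import all_boot all_order all_algebra.
From mathcomp Require Import all_classical all_reals all_analysis.
Set Implicit Arguments. Unset Strict Implicit. Unset Printing Implicit Defensive.
Import Order.TTheory GRing.Theory Num.Theory.
Import numFieldNormedType.Exports.
Local Open Scope classical_set_scope.
Local Open Scope ring_scope.

Definition S1 (R : realType) : set (R * R) := [set p | p.1 ^+ 2 + p.2 ^+ 2 = 1].
Arguments S1 R : clear implicits.

(* For points of S1 it is 1 on counterclockwise (positively oriented)
   triples, -1 on clockwise ones, and 0 iff the points are not pairwise
   distinct (three distinct points of a circle are never collinear). *)
Definition orient (R : realType) (a b c : R * R) : R :=
  Num.sg ((b.1 - a.1) * (c.2 - a.2) - (b.2 - a.2) * (c.1 - a.1)).

(* Essential image of a map f : T -> X (X a topological space):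
   the support of the push-forward measure f_* mu. *)
Definition ess_image d (T : measurableType d) (R : realType)
  (mu : set T -> \bar R) (X : topologicalType) (f : T -> X) : set X :=
  [set p | forall U : set X, open U -> U p -> (0 < mu (f @^-1` U))%E].

Definition S1_homeo (R : realType) (h : R * R -> R * R) : Prop :=
  (forall p, S1 R p -> S1 R (h p)) /\
  {within S1 R, continuous h} /\
  exists g : R * R -> R * R,
    [/\ forall p, S1 R p -> S1 R (g p),
        {within S1 R, continuous g},
        forall p, S1 R p -> g (h p) = p &
        forall p, S1 R p -> h (g p) = p].

Definition S1_orientation_preserving (R : realType) (h : R * R -> R * R) : Prop :=
  forall a b c, S1 R a -> S1 R b -> S1 R c ->
    orient (h a) (h b) (h c) = orient a b c.

From HB Require Import structures.
From mathcomp Require Import all_boot all_order all_algebra.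
From mathcomp Require Import all_classical all_reals all_analysis.
From mathcomp Require Import measurable_realfun ring lra.
Set Implicit Arguments.
Unset Strict Implicit.
Unset Printing Implicit Defensive.
Import Order.TTheory GRing.Theory Num.Theory.
Import numFieldNormedType.Exports.
Local Open Scope classical_set_scope.
Local Open Scope ring_scope.

(* The support F of the joint law of (phi, psi) is a closed subset of S1 x S1
   containing (phi x, psi x) for almost every x.  Its first projection is
   compact and meets every neighbourhood of a point of the support S1 of phi_*nu,
   so every fibre of F over S1 is nonempty.  A fibre cannot contain two points
   q <> q': some diameter bc separates them, and for x, y with psi x, psi y close
   to b, c and p, phi x, phi y pairwise distinct (there are no atoms), the almost
   sure agreement of orientations, which are locally constant at nondegenerate
   triples, would give orient(q, psi x, psi y) = orient(p, phi x, phi y) =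
   orient(q', psi x, psi y).  Hence F is the graph of a map h : S1 -> S1, which
   is continuous because its graph is closed and S1 is compact; exchanging phi
   and psi gives the inverse of h, and h preserves orientation because the
   orientations of nondegenerate triples of points of F agree. *)

Section CircleGeometry.
Variable R : realType.
Implicit Types a b c p q : R * R.

Definition cross a b c : R := (b.1 - a.1) * (c.2 - a.2) - (b.2 - a.2) * (c.1 - a.1).

Definition sqdist p q : R := (p.1 - q.1) ^+ 2 + (p.2 - q.2) ^+ 2.

Lemma orientE a b c : orient a b c = Num.sg (cross a b c). Proof. by []. Qed.

Lemma sqdist_eq0 p q : sqdist p q = 0 -> p = q.
Proof.
case: p q => [p1 p2] [q1 q2]; rewrite /sqdist /= => /eqP.
by rewrite paddr_eq0 ?sqr_ge0 // !sqrf_eq0 !subr_eq0 => /andP[/eqP-> /eqP->].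
Qed.

Lemma cross_continuous :
  continuous (fun t : R * R * (R * R) * (R * R) => cross t.1.1 t.1.2 t.2).
Proof.
have fstC (U V : topologicalType) : continuous (@fst U V) by move=> ?; exact: cvg_fst.
have sndC (U V : topologicalType) : continuous (@snd U V) by move=> ?; exact: cvg_snd.
move=> t; apply: cvgB; apply: cvgM; apply: cvgB;
  by do ![exact: fstC | exact: sndC |
          apply: (continuous_comp (f := fun x => _)); [|exact: fstC || exact: sndC]].
Qed.

Lemma orient_locally_constant a b c : cross a b c != 0 ->
  exists2 e, 0 < e & forall a' b' c', ball a e a' -> ball b e b' -> ball c e c' ->
    orient a' b' c' = orient a b c.
Proof.
move=> nz; have cc := @cross_continuous (a, b, c).
suff /nbhs_ballP[e e0 He] : \forall t \near (a, b, c),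
    Num.sg (cross t.1.1 t.1.2 t.2) = Num.sg (cross a b c).
  by exists e => // a' b' c' ha hb hc; exact: (He (a', b', c')).
have [pos|] := ltP 0 (cross a b c).
  by near=> t; rewrite !gtr0_sg //; near: t; exact: (cvgr_gt _ cc).
rewrite le_eqVlt (negbTE nz) /= => neg.
by near=> t; rewrite !ltr0_sg //; near: t; exact: (cvgr_lt _ cc).
Unshelve. all: by end_near.
Qed.

(* The product of the three squared distances is a combination of
   [|b|^2 - |a|^2], [|c|^2 - |a|^2] and [cross a b c]. *)
Lemma S1_cross_eq0P a b c : S1 R a -> S1 R b -> S1 R c ->
  cross a b c = 0 <-> [\/ a = b, b = c | a = c].
Proof.
move=> Sa Sb Sc; split; last by case=> ->; rewrite /cross; ring.
move: Sa Sb Sc; case: a b c => [a1 a2] [b1 b2] [c1 c2]; rewrite /S1 /= => ha hb hc hx.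
have : sqdist (a1, a2) (b1, b2) * sqdist (b1, b2) (c1, c2) * sqdist (a1, a2) (c1, c2) = 0.
  set u1 := b1 - a1; set u2 := b2 - a2; set v1 := c1 - a1; set v2 := c2 - a2.
  set nu := u1 ^+ 2 + u2 ^+ 2; set nv := v1 ^+ 2 + v2 ^+ 2; set uv := u1 * v1 + u2 * v2.
  set hu := b1 ^+ 2 + b2 ^+ 2 - (a1 ^+ 2 + a2 ^+ 2).
  set hv := c1 ^+ 2 + c2 ^+ 2 - (a1 ^+ 2 + a2 ^+ 2).
  have -> : sqdist (a1, a2) (b1, b2) * sqdist (b1, b2) (c1, c2) * sqdist (a1, a2) (c1, c2)
    = nu * (nv * hu - uv * hv - 2 * (a1 * v2 - a2 * v1) * cross (a1, a2) (b1, b2) (c1, c2))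
      + nv * (nu * hv - uv * hu + 2 * (a1 * u2 - a2 * u1) * cross (a1, a2) (b1, b2) (c1, c2)).
    by rewrite /sqdist /nu /nv /uv /hu /hv /cross /u1 /u2 /v1 /v2 /=; ring.
  by rewrite /hu /hv ha hb hc hx subrr; ring.
move/eqP; rewrite !mulf_eq0 -orbA => /or3P[] /eqP/sqdist_eq0 e.
- exact: Or31.
- exact: Or32.
- exact: Or33.
Qed.

(* The diameter orthogonal to q - q' separates q from q'. *)
Lemma S1_separating_diameter q q' : S1 R q -> S1 R q' -> q != q' ->
  exists b c, [/\ S1 R b, S1 R c, 0 < cross q b c & cross q' b c < 0].
Proof.
move=> + + neq; case: q q' neq => [q1 q2] [p1 p2] neq; rewrite /S1 /= => hq hp.
have s0 : 0 < sqdist (q1, q2) (p1, p2).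
  rewrite lt0r addr_ge0 ?sqr_ge0 // andbT.
  by apply: contra neq => /eqP/sqdist_eq0 ->.
rewrite /sqdist /= in s0; set s := _ + _ in s0.
set r := Num.sqrt s; have r0 : 0 < r by rewrite sqrtr_gt0.
have rr : r ^+ 2 = s by rewrite sqr_sqrtr // ltW.
have rs : s / r = r by rewrite -rr expr2 mulfK // gt_eqF.
have qw : 2 * (q1 * (q1 - p1) + q2 * (q2 - p2)) = s by rewrite /s; lra.
have pw : 2 * (p1 * (q1 - p1) + p2 * (q2 - p2)) = - s by rewrite /s; lra.
pose b := (- (q2 - p2) / r, (q1 - p1) / r).
have crossE a : cross a b (- b) = 2 * (a.1 * (q1 - p1) + a.2 * (q2 - p2)) / r.
  by rewrite /cross /=; field; rewrite gt_eqF.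
have Sb : S1 R b by rewrite /S1 /= !expr_div_n sqrrN -mulrDl addrC -/s rr divff // gt_eqF.
exists b, (- b); split => //.
- by rewrite /S1 /= !sqrrN.
- by rewrite crossE /= qw rs.
- by rewrite crossE /= pw mulNr rs oppr_lt0.
Qed.

Lemma S1_cross_eq0_inj (f : R * R -> R * R) a b c :
  (forall p, S1 R p -> S1 R (f p)) ->
  (forall p p', S1 R p -> S1 R p' -> f p = f p' -> p = p') ->
  S1 R a -> S1 R b -> S1 R c -> cross (f a) (f b) (f c) = 0 <-> cross a b c = 0.
Proof.
move=> fS inj Sa Sb Sc.
rewrite (S1_cross_eq0P (fS _ Sa) (fS _ Sb) (fS _ Sc)) (S1_cross_eq0P Sa Sb Sc).
split=> -[] e; [apply: Or31 | apply: Or32 | apply: Or33 | apply: Or31 | apply: Or32 | apply: Or33];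
  by [apply: inj | rewrite e].
Qed.

Lemma S1_closed : closed (S1 R).
Proof.
have sq_cont : continuous (fun p : R * R => p.1 ^+ 2 + p.2 ^+ 2).
  by move=> p; apply: cvgD; apply: cvgM; [exact: cvg_fst | exact: cvg_fst |
                                         exact: cvg_snd | exact: cvg_snd].
have -> : S1 R = (fun p : R * R => p.1 ^+ 2 + p.2 ^+ 2) @^-1` [set 1] by [].
by move/continuous_closedP : sq_cont; apply; exact: closed_eq.
Qed.

Lemma S1_compact : compact (S1 R).
Proof.
apply: (@subclosed_compact _ _ (`[(-1 : R), 1] `*` `[(-1 : R), 1])) S1_closed _ _.
  by apply: compact_setX; exact: segment_compact.
move=> [p1 p2]; rewrite /S1 /= => h; rewrite !in_itv /=; split; apply/andP; split; nra.
Qed.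

Lemma S1xS1_compact : compact (S1 R `*` S1 R).
Proof. by apply: compact_setX; exact: S1_compact. Qed.
End CircleGeometry.

Lemma closed_graph_continuous {X Y : topologicalType} (A : set X) (K : set Y) (h : X -> Y) :
  compact K -> h @` A `<=` K ->
  (forall p q, A p -> closure [set (x, h x) | x in A] (p, q) -> q = h p) ->
  {within A, continuous h}.
Proof.
move=> cK hAK hcl; apply/subspace_continuousP => p Ap V hpV; apply: contrapT => nV.
pose D := A `&` h @^-1` ~` V.
have clD : closure D p.
  move=> B Bp; apply/set0P/eqP => DB0.
  apply: nV; apply: filterS Bp => x Bx Ax; apply: contrapT => nVx.
  by have : (D `&` B) x by []; rewrite DB0.
have PF : ProperFilter (within D (nbhs p)) by exact: within_nbhs_proper.
have [q [Kq clq]] : exists q, K q /\ cluster (h @ within D (nbhs p)) q.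
  apply: cK; apply: filterS (withinT D _) => x [Ax _].
  by apply: hAK; exists x.
have qE : q = h p.
  apply: hcl => // W [[B C] /= [Bp Cq] BCW].
  have hDB : (h @ within D (nbhs p)) (h @` (D `&` B)).
    by apply: filterS Bp => x Bx Dx; exists x.
  have [_ [[x [Dx Bx] <-] Chx]] := clq _ _ hDB Cq.
  by exists (x, h x); split; [exists x; case: Dx | exact: BCW].
have [y [nVy Vy]] : ~` V `&` V !=set0.
  apply: clq; last by rewrite qE.
  by apply: filterS (withinT D _) => x [].
exact: nVy Vy.
Qed.

Section EssentialImage.
Context {d} {T : measurableType d} {R : realType} (mu : {measure set T -> \bar R}).

Lemma ess_image_closed (X : topologicalType) (f : T -> X) : closed (ess_image mu f).
Proof.
move=> p clp U oU Up; have [z [Fz Uz]] := clp U (open_nbhs_nbhs (conj oU Up)).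
exact: Fz.
Qed.

Lemma ess_image_sub_closed (X : topologicalType) (f : T -> X) (K : set X) :
  closed K -> (forall x, K (f x)) -> ess_image mu f `<=` K.
Proof.
move=> cK fK p Fp; apply: contrapT => nKp; have := Fp _ (closed_openC cK) nKp.
by rewrite (_ : f @^-1` (~` K) = set0) ?measure0 ?ltxx // -subset0 => x /(_ (fK x)).
Qed.

Lemma ess_image_ball_gt0 (V : pseudoMetricNormedZmodType R) (f : T -> V) p e :
  ess_image mu f p -> 0 < e -> (0 < mu (f @^-1` ball p e))%E.
Proof. by move=> Fp e0; apply: Fp; [exact: ball_open | exact: ballxx]. Qed.

Lemma ae_exists_in (A : set T) (Q : T -> Prop) : measurable A -> (0 < mu A)%E ->
  {ae mu, forall x, Q x} -> exists2 x, A x & Q x.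
Proof.
move=> mA A0 aeQ; apply: contrapT => nex.
suff /(negligibleP _ mA) A00 : mu.-negligible A by move: A0; rewrite A00 ltxx.
by apply: negligibleS aeQ => x Ax Qx; apply: nex; exists x.
Qed.

Lemma negligible_bigcup_countable (I : countType) (F : I -> set T) :
  (forall i, mu.-negligible (F i)) -> mu.-negligible (\bigcup_i F i).
Proof.
move=> nF; apply: (@negligibleS _ _ _ _ (\bigcup_n oapp F set0 (unpickle n))).
  by move=> x [i _ Fix]; exists (pickle i) => //; rewrite pickleK.
apply: negligible_bigcup => n.
by case: (unpickle n) => [i|] /=; [exact: nF | exact: negligible_set0].
Qed.

End EssentialImage.

Local Notation qindex := ((rat * rat) * (rat * rat) * rat)%type.

Section RationalBalls.
Variable R : realType.

Definition qcenter (k : qindex) : (R * R) * (R * R) :=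
  ((ratr k.1.1.1, ratr k.1.1.2), (ratr k.1.2.1, ratr k.1.2.2)).

Definition qradius (k : qindex) : R := ratr k.2.

Lemma rat_approx (x r : R) : 0 < r -> exists q : rat, `|ratr q - x| < r.
Proof.
move=> r0; have /rat_in_itvoo[q] : x - r < x + r by lra.
by rewrite in_itv /= => /andP[h1 h2]; exists q; rewrite ltr_distl; apply/andP; split; lra.
Qed.

Lemma qball_between (z : (R * R) * (R * R)) e : 0 < e ->
  exists k, ball (qcenter k) (qradius k) z /\ ball (qcenter k) (qradius k) `<=` ball z e.
Proof.
move=> e0; have /rat_in_itvoo[r] : e / 4 < e / 2 by lra.
rewrite in_itv /= => /andP[r1 r2]; have r0 : 0 < (ratr r : R) by lra.
have [q1 h1] := rat_approx z.1.1 r0; have [q2 h2] := rat_approx z.1.2 r0.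
have [q3 h3] := rat_approx z.2.1 r0; have [q4 h4] := rat_approx z.2.2 r0.
exists ((q1, q2), (q3, q4), r); rewrite /qcenter /qradius /=.
split; first by split; split; rewrite /= -ball_normE.
have tri (a b c : R) : `|a - b| < ratr r -> `|a - c| < ratr r -> `|b - c| < e.
  by move=> hab hac; have := ler_distD a b c; rewrite (distrC b a); lra.
move=> [[w1 w2] [w3 w4]] [[k1 k2] [k3 k4]]; rewrite -!ball_normE /= in k1 k2 k3 k4.
by split; split; rewrite /= -ball_normE /=; apply: tri; eassumption.
Qed.

Lemma open_qball_cover (U : set ((R * R) * (R * R))) : open U ->
  U = \bigcup_(k in [set k | ball (qcenter k) (qradius k) `<=` U])
        ball (qcenter k) (qradius k).
Proof.
move=> oU; apply/seteqP; split => [z Uz|z [k /= kU]]; last exact: kU.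
have /nbhs_ballP[e e0 eU] : nbhs z U by exact: open_nbhs_nbhs.
by have [k [zk kz]] := qball_between z e0; exists k => //; exact: subset_trans eU.
Qed.

End RationalBalls.

Section JointSupport.
Context {d} {T : measurableType d} {R : realType} (mu : {measure set T -> \bar R}).

Lemma measurable_preimage_ball (f : T -> R * R) p e :
  measurable_fun setT f -> measurable (f @^-1` ball p e).
Proof.
move=> mf; rewrite -[X in measurable X]setTI; apply: mf => //.
exact: measurableX (measurable_ball _ _) (measurable_ball _ _).
Qed.

Lemma measurable_preimage_set1 (f : T -> R * R) p :
  measurable_fun setT f -> measurable (f @^-1` [set p]).
Proof.
move=> mf; rewrite -[X in measurable X]setTI; apply: mf => //.
rewrite (_ : [set p] = [set p.1] `*` [set p.2]); first exact: measurableX.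
by apply/seteqP; split => [_ -> // | [x y] /= [-> ->]]; case: p.
Qed.

Lemma ae_preimage_neq (f : T -> R * R) p : measurable_fun setT f ->
  mu (f @^-1` [set p]) = 0%E -> {ae mu, forall x, f x <> p}.
Proof.
move=> mf null; have : mu.-negligible (f @^-1` [set p]).
  exact/negligibleP/null/measurable_preimage_set1.
by apply: negligibleS => x /= /contrapT.
Qed.

Context {phi psi : T -> R * R}.
Hypotheses (mphi : measurable_fun setT phi) (mpsi : measurable_fun setT psi).

Lemma measurable_joint_preimage_ball z e :
  measurable ((fun x => (phi x, psi x)) @^-1` ball z e).
Proof.
rewrite (_ : _ @^-1` _ = phi @^-1` ball z.1 e `&` psi @^-1` ball z.2 e) //.
by apply: measurableI; exact: measurable_preimage_ball.
Qed.

Lemma measurable_joint_preimage_open U : open U ->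
  measurable ((fun x => (phi x, psi x)) @^-1` U).
Proof.
move=> /open_qball_cover->; rewrite preimage_bigcup bigcup_mkcond.
apply: countable_bigcupT_measurable => [|k]; first exact: countableP.
by case: ifP => _; [exact: measurable_joint_preimage_ball | exact: measurable0].
Qed.

Lemma ess_image_jointP z : ess_image mu (fun x => (phi x, psi x)) z <->
  forall e, 0 < e -> (0 < mu ((fun x => (phi x, psi x)) @^-1` ball z e))%E.
Proof.
split => [Fz e|pos U oU Uz]; first exact: ess_image_ball_gt0.
have /nbhs_ballP[e e0 eU] : nbhs z U by exact: open_nbhs_nbhs.
apply: lt_le_trans (pos e e0) _; apply: le_measure; rewrite ?inE.
- exact: measurable_joint_preimage_ball.
- exact: measurable_joint_preimage_open.
- by move=> x; apply: eU.
Qed.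

Lemma ae_ess_image_joint :
  {ae mu, forall x, ess_image mu (fun x => (phi x, psi x)) (phi x, psi x)}.
Proof.
pose N k := (fun x => (phi x, psi x)) @^-1` ball (qcenter R k) (qradius R k).
apply: (@negligibleS _ _ _ _ (\bigcup_(k in [set k | mu (N k) = 0%E]) N k)).
  move=> x /= /ess_image_jointP /existsNP[e /not_implyP[e0 /negP]].
  rewrite measure_gt0 negbK => /eqP null.
  have [k [xk ke]] := qball_between (phi x, psi x) e0.
  exists k => //=; apply/eqP; rewrite eq_le measure_ge0 andbT -null.
  by apply: le_measure; rewrite ?inE; [exact: measurable_joint_preimage_ball.. | move=> y /ke].
rewrite bigcup_mkcond; apply: negligible_bigcup_countable => k.
case: ifP => [/[1!inE] /= null|_]; last exact: negligible_set0.
exact/negligibleP/null/measurable_joint_preimage_ball.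
Qed.

End JointSupport.

Lemma ess_image_joint_swap d (T : measurableType d) (R : realType)
    (mu : {measure set T -> \bar R}) (phi psi : T -> R * R) p q :
  measurable_fun setT phi -> measurable_fun setT psi ->
  ess_image mu (fun x => (psi x, phi x)) (q, p) <-> ess_image mu (fun x => (phi x, psi x)) (p, q).
Proof.
move=> mphi mpsi; rewrite (ess_image_jointP _ mpsi mphi) (ess_image_jointP _ mphi mpsi).
have E e : (fun x => (psi x, phi x)) @^-1` ball (q, p) e =
           (fun x => (phi x, psi x)) @^-1` ball (p, q) e.
  by apply/seteqP; split => x [? ?]; split.
by split => H e e0; [rewrite -E | rewrite E]; exact: H.
Qed.

Section CircleCoupling.
Context {d} {T : measurableType d} {R : realType}.

Record circle_coupling (P : probability T R) (phi psi : T -> R * R) : Prop :=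
  CircleCoupling {
    coupling_mfst : measurable_fun setT phi;
    coupling_msnd : measurable_fun setT psi;
    coupling_S1_fst : forall x, S1 R (phi x);
    coupling_S1_snd : forall x, S1 R (psi x);
    coupling_diffuse_fst : forall p, P (phi @^-1` [set p]) = 0%E;
    coupling_diffuse_snd : forall p, P (psi @^-1` [set p]) = 0%E;
    coupling_support_fst : ess_image P phi = S1 R;
    coupling_support_snd : ess_image P psi = S1 R;
    coupling_orient : {ae ((P \x P) \x P)%E, forall t : T * T * T,
      orient (phi t.1.1) (phi t.1.2) (phi t.2) = orient (psi t.1.1) (psi t.1.2) (psi t.2)} }.

Lemma circle_coupling_sym P phi psi :
  circle_coupling P phi psi -> circle_coupling P psi phi.
Proof.
case=> mphi mpsi Sphi Spsi nphi npsi ephi epsi ae; constructor => //.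
by apply: negligibleS ae => t /= neq /esym.
Qed.

Variables (P : probability T R) (phi psi : T -> R * R).
Hypothesis hc : circle_coupling P phi psi.

Let F := ess_image P (fun x => (phi x, psi x)).
Let mphi := coupling_mfst hc.
Let mpsi := coupling_msnd hc.

Lemma support_sub_S1 z : F z -> S1 R z.1 /\ S1 R z.2.
Proof.
have cS1S1 : closed (S1 R `*` S1 R).
  by apply: (compact_closed _ (@S1xS1_compact R)); exact: norm_hausdorff.
apply: ess_image_sub_closed cS1S1 _ z => x.
by split; [exact: (coupling_S1_fst hc x) | exact: (coupling_S1_snd hc x)].
Qed.

Lemma support_compact : compact F.
Proof.
apply: (@subclosed_compact _ F (S1 R `*` S1 R)); [exact: ess_image_closed | exact: S1xS1_compact |].
by move=> z /support_sub_S1[].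
Qed.

Lemma support_fiber_nonempty p : S1 R p -> exists q, F (p, q).
Proof.
move=> Sp; have cl : closed (fst @` F).
  apply: compact_closed; first exact: norm_hausdorff.
  apply: continuous_compact support_compact; apply: continuous_subspaceT => z.
  exact: cvg_fst.
suff /cl[[p' q] Fpq /= <-] : closure (fst @` F) p by exists q.
move=> B /nbhs_ballP[e e0 eB].
have pos : (0 < P (phi @^-1` ball p e))%E.
  by apply: ess_image_ball_gt0 e0; rewrite (coupling_support_fst hc).
have [x xp Fx] := ae_exists_in (measurable_preimage_ball p e mphi) pos
                    (ae_ess_image_joint P mphi mpsi).
by exists (phi x); split; [exists (phi x, psi x) | exact: eB].
Qed.

Lemma support_orient a a' b b' c c' : F (a, a') -> F (b, b') -> F (c, c') ->
  cross a b c != 0 -> cross a' b' c' != 0 -> orient a b c = orient a' b' c'.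
Proof.
move=> Fa Fb Fc nz nz'.
have [e1 e10 H1] := orient_locally_constant nz.
have [e2 e20 H2] := orient_locally_constant nz'.
pose e := Order.min e1 e2; have e0 : 0 < e by rewrite lt_min e10 e20.
have be1 (u v : R * R) : ball u e v -> ball u e1 v by apply: le_ball; rewrite ge_min lexx.
have be2 (u v : R * R) : ball u e v -> ball u e2 v by apply: le_ball; rewrite ge_min lexx orbT.
pose A z := (fun x => (phi x, psi x)) @^-1` ball z e.
have mA z : measurable (A z) by exact: measurable_joint_preimage_ball.
have PA z : F z -> (0 < P (A z))%E by move/(ess_image_jointP P mphi mpsi); apply.
have pos : (0 < ((P \x P) \x P) (A (a, a') `*` A (b, b') `*` A (c, c')))%E.
  rewrite product_measure1E //; last exact: measurableX.
  apply: mule_gt0; last exact: PA.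
  by have := mule_gt0 (PA _ Fa) (PA _ Fb); rewrite -product_measure1E.
have [[[x y] z] [[[xa xa'] [yb yb']] [zc zc']] /= eq] :=
  ae_exists_in (measurableX (measurableX (mA _) (mA _)) (mA _)) pos (coupling_orient hc).
rewrite -(H1 _ _ _ (be1 _ _ xa) (be1 _ _ yb) (be1 _ _ zc)).
by rewrite -(H2 _ _ _ (be2 _ _ xa') (be2 _ _ yb') (be2 _ _ zc')).
Qed.

Lemma support_sample_snd b e (Q : T -> Prop) : S1 R b -> 0 < e ->
  {ae P, forall x, Q x} -> exists2 x, ball b e (psi x) & F (phi x, psi x) /\ Q x.
Proof.
move=> Sb e0 aeQ; have pos : (0 < P (psi @^-1` ball b e))%E.
  by apply: ess_image_ball_gt0 e0; rewrite (coupling_support_snd hc).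
apply: ae_exists_in (measurable_preimage_ball b e mpsi) pos _.
exact: filterI (ae_ess_image_joint P mphi mpsi) aeQ.
Qed.

Lemma support_fiber_unique p q q' : F (p, q) -> F (p, q') -> q = q'.
Proof.
move=> Fq Fq'; apply: contrapT => /eqP neq.
have [Sp Sq] := support_sub_S1 Fq; have [_ Sq'] := support_sub_S1 Fq'.
have [b [c [Sb Sc pos neg]]] := S1_separating_diameter Sq Sq' neq.
have [e1 e10 H1] := orient_locally_constant (lt0r_neq0 pos).
have [e2 e20 H2] := orient_locally_constant (ltr0_neq0 neg).
pose e := Order.min e1 e2; have e0 : 0 < e by rewrite lt_min e10 e20.
have be1 (u v : R * R) : ball u e v -> ball u e1 v by apply: le_ball; rewrite ge_min lexx.
have be2 (u v : R * R) : ball u e v -> ball u e2 v by apply: le_ball; rewrite ge_min lexx orbT.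
have ae_neq z : {ae P, forall x, phi x <> z}.
  exact: ae_preimage_neq mphi (coupling_diffuse_fst hc z).
have [x xb [Fx xp]] := support_sample_snd Sb e0 (ae_neq p).
have [y yc [Fy [yp yx]]] := support_sample_snd Sc e0 (filterI (ae_neq p) (ae_neq (phi x))).
have Sphi := coupling_S1_fst hc.
have nz : cross p (phi x) (phi y) != 0.
  by apply/eqP => /(S1_cross_eq0P Sp (Sphi x) (Sphi y))[] /esym; [exact: xp | exact: yx | exact: yp].
have o1 : orient q (psi x) (psi y) = 1.
  by rewrite (H1 _ _ _ (ballxx _ e10) (be1 _ _ xb) (be1 _ _ yc)) orientE gtr0_sg.
have o2 : orient q' (psi x) (psi y) = -1.
  by rewrite (H2 _ _ _ (ballxx _ e20) (be2 _ _ xb) (be2 _ _ yc)) orientE ltr0_sg.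
have nz1 : cross q (psi x) (psi y) != 0 by rewrite -sgr_eq0 -orientE o1 oner_neq0.
have nz2 : cross q' (psi x) (psi y) != 0 by rewrite -sgr_eq0 -orientE o2 oppr_eq0 oner_neq0.
have := support_orient Fq Fx Fy nz nz1; have := support_orient Fq' Fx Fy nz nz2.
by rewrite o1 o2 => ->; lra.
Qed.

Definition support_map p := xget p [set q | F (p, q)].

Lemma support_map_spec p : S1 R p -> F (p, support_map p).
Proof. by move=> Sp; exact: (xgetPex p (support_fiber_nonempty Sp)). Qed.

Lemma support_mapP p q : F (p, q) <-> S1 R p /\ q = support_map p.
Proof.
split => [Fpq | [Sp ->]]; last exact: support_map_spec.
have [Sp _] := support_sub_S1 Fpq.
by split => //; exact: support_fiber_unique Fpq (support_map_spec Sp).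
Qed.

Lemma support_map_S1 p : S1 R p -> S1 R (support_map p).
Proof. by move=> /support_map_spec/support_sub_S1[]. Qed.

Lemma support_map_graph : F = [set (p, support_map p) | p in S1 R].
Proof.
apply/seteqP; split => [[p q] /support_mapP[Sp ->] | _ [p Sp <-]]; first by exists p.
exact/support_mapP.
Qed.

Lemma support_map_continuous : {within S1 R, continuous support_map}.
Proof.
apply: (closed_graph_continuous (K := S1 R)) => [|_ [p Sp <-]|p q Sp clpq].
- exact: S1_compact.
- exact: support_map_S1.
suff /support_mapP[] : F (p, q) by [].
by move: clpq; rewrite -support_map_graph; exact: ess_image_closed.
Qed.

Lemma support_map_ae : {ae P, forall x, support_map (phi x) = psi x}.
Proof.
apply: filterS (ae_ess_image_joint P mphi mpsi) => x.
by move/support_mapP => [_ <-].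
Qed.

End CircleCoupling.

Section SupportMapInverse.
Context {d} {T : measurableType d} {R : realType}.
Variables (P : probability T R) (phi psi : T -> R * R).
Hypothesis hc : circle_coupling P phi psi.

Lemma support_map_cancel p :
  S1 R p -> support_map P psi phi (support_map P phi psi p) = p.
Proof.
move=> Sp; have Fp := support_map_spec hc Sp.
move/(ess_image_joint_swap _ _ _ (coupling_mfst hc) (coupling_msnd hc)) : Fp.
by move/(support_mapP (circle_coupling_sym hc)) => [_ <-].
Qed.

Lemma support_map_orient : S1_orientation_preserving (support_map P phi psi).
Proof.
have hS := support_map_S1 hc.
have inj p p' : S1 R p -> S1 R p' -> support_map P phi psi p = support_map P phi psi p' -> p = p'.
  by move=> Sp Sp' e; rewrite -(support_map_cancel Sp) e support_map_cancel.
move=> a b c Sa Sb Sc; have iff0 := S1_cross_eq0_inj hS inj Sa Sb Sc.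
have [z|nz] := eqVneq (cross a b c) 0; first by rewrite !orientE z (iff0.2 z).
symmetry; apply: (support_orient hc) => //; try exact: support_map_spec.
by apply: contra nz => /eqP/iff0.1/eqP.
Qed.

End SupportMapInverse.

Theorem lemma4p13 (R : realType) (d : measure_display) (T : measurableType d)
  (P : probability T R) (phi psi : T -> R * R) :
  measurable_fun setT phi -> measurable_fun setT psi ->
  (forall x, S1 R (phi x)) -> (forall x, S1 R (psi x)) ->
  (forall p : R * R, P (phi @^-1` [set p]) = 0%E) ->
  (forall p : R * R, P (psi @^-1` [set p]) = 0%E) ->
  ess_image P phi = S1 R -> ess_image P psi = S1 R ->
  {ae ((P \x P) \x P)%E, forall t : T * T * T,
     orient (phi t.1.1) (phi t.1.2) (phi t.2) =
     orient (psi t.1.1) (psi t.1.2) (psi t.2)} ->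
  exists h : R * R -> R * R,
    [/\ S1_homeo h, S1_orientation_preserving h,
        ess_image P (fun x => (phi x, psi x)) = [set (p, h p) | p in S1 R] &
        {ae P, forall x, h (phi x) = psi x}].
Proof.
move=> mphi mpsi Sphi Spsi nphi npsi ephi epsi horient.
have hc := CircleCoupling mphi mpsi Sphi Spsi nphi npsi ephi epsi horient.
have hc' := circle_coupling_sym hc.
exists (support_map P phi psi); split.
- split; first exact: support_map_S1 hc.
  split; first exact: support_map_continuous hc.
  exists (support_map P psi phi); split.
  + exact: support_map_S1 hc'.
  + exact: support_map_continuous hc'.
  + exact: support_map_cancel hc.
  + exact: support_map_cancel hc'.
- exact: support_map_orient hc.
- exact: support_map_graph hc.
- exact: support_map_ae hc.
Qed.
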